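(* Let $I=\langle N,M,V\rangle$ be an ordered instance of chores and let $B\subseteq M$ be a bundle with $v_i(B)\ge\mu_i$ for some agent $i\in N$. If every agent $i'\in N\setminus\{i\}$ has an MMS partition containing a bundle $B_{i'}$ with $B\succeq B_{i'}$, then allocating $B$ to $i$ is a valid reduction.
   Context: An instance of chores $I=\langle N,M,V\rangle$ has agents $N=\{1,\dots,n\}$, chores $M=\{1,\dots,m\}$ and additive valuations $v_i$ with $v_i(\emptyset)=0$, $v_i(S)=\sum_{g\in S}v_i(\{g\})$ and $v_{ij}:=v_i(\{j\})\le 0$. It is ordered if $v_{ij}\le v_{i(j+1)}$ for all $i$ and $1\le j<m$. An allocation ($n$-partition) is an ordered $n$-tuple of pairwise disjoint, possibly empty subsets of $M$ with union $M$. The maximin share of $i$ in $I$ is $\mu_i=\mu_i^I=\max_A\min_j v_i(A_j)$ over all allocations; an MMS partition of $i$ is an allocation $A$ with $v_i(A_j)\ge\mu_i$ for all $j$. For $B,B'\subseteq M$, $B\succeq B'$ means there is an injective map $f:B'\to B$ with $f(j)\le j$ for all $j\in B'$. Removing agents $N'\subseteq N$ and items $M'\subseteq M$ is a valid reduction if the items of $M'$ can be allocated to the agents of $N'$ so that each $i'\in N'$ receives a bundle $B_{i'}$ with $v_{i'}(B_{i'})\ge\mu_{i'}^I$, and every $i\in N\setminus N'$ satisfies $\mu_i^{I'}\ge\mu_i^I$, where $I'=\langle N\setminus N', M\setminus M', V\rangle$ (valuations restricted, maximin share computed with $|N\setminus N'|$ bundles). ''Allocating $B$ to $i$ is a valid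 reduction'' means this holds with $N'=\{i\}$, $M'=B$. *)

From HB Require Import structures.
From mathcomp Require Import all_boot all_order all_algebra.
Set Implicit Arguments. Unset Strict Implicit. Unset Printing Implicit Defensive.
Import Order.TTheory GRing.Theory Num.Theory.
Local Open Scope ring_scope.

(* Items M = 'I_m (item j+1 in the paper is ordinal j), agents N = 'I_n.
   A valuation of an agent is u : 'I_m -> R, extended additively. *)

Definition bval (R : realDomainType) (m : nat) (u : 'I_m -> R) (S : {set 'I_m}) : R :=
  \sum_(g in S) u g.

Definition is_partition (m k : nat) (S : {set 'I_m}) (A : {ffun 'I_k -> {set 'I_m}}) : bool :=
  [forall j1 : 'I_k, forall j2 : 'I_k, (j1 != j2) ==> [disjoint A j1 & A j2]] &&
  (\bigcup_(j < k) A j == S).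

(* min_j u(A_j); the neutral element 0 is harmless since chore values are <= 0
   (and k >= 1 whenever it matters). *)
Definition pmin (R : realDomainType) (m k : nat) (u : 'I_m -> R)
    (A : {ffun 'I_k -> {set 'I_m}}) : R :=
  \big[Num.min/0]_(j < k) bval u (A j).

(* The neutral element u(S)
   is a lower bound of every partition's value (all values are <= 0), so
   it does not affect the maximum whenever a partition exists. *)
Definition mms (R : realDomainType) (m : nat) (u : 'I_m -> R) (S : {set 'I_m}) (k : nat) : R :=
  \big[Num.max/bval u S]_(A : {ffun 'I_k -> {set 'I_m}} | is_partition S A) pmin u A.

Definition is_mms_partition (R : realDomainType) (m : nat) (u : 'I_m -> R)
    (S : {set 'I_m}) (k : nat) (A : {ffun 'I_k -> {set 'I_m}}) : Prop :=
  is_partition S A /\ forall j, mms u S k <= bval u (A j).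

Arguments is_mms_partition {R m} u S k A.

Definition succeq (m : nat) (B B' : {set 'I_m}) : Prop :=
  exists f : 'I_m -> 'I_m,
    {in B' &, injective f} /\ forall j, j \in B' -> f j \in B /\ (f j <= j)%N.

Definition chores (R : realDomainType) (n m : nat) (v : 'I_n -> 'I_m -> R) : Prop :=
  forall i j, v i j <= 0.
Definition ordered (R : realDomainType) (n m : nat) (v : 'I_n -> 'I_m -> R) : Prop :=
  forall i (j j' : 'I_m), (j' = j.+1 :> nat) -> v i j <= v i j'.

Definition valid_reduction (R : realDomainType) (n m : nat) (v : 'I_n -> 'I_m -> R)
    (N' : {set 'I_n}) (M' : {set 'I_m}) : Prop :=
  (exists Bs : 'I_n -> {set 'I_m},
      (forall i1 i2, i1 \in N' -> i2 \in N' -> i1 != i2 -> [disjoint Bs i1 & Bs i2]) /\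
      \bigcup_(i' in N') Bs i' = M' /\
      (forall i', i' \in N' -> mms (v i') setT n <= bval (v i') (Bs i'))) /\
  (forall i, i \in ~: N' -> mms (v i) setT n <= mms (v i) (~: M') #|~: N'|).

From HB Require Import structures.
From mathcomp Require Import all_boot all_order all_algebra.
From mathcomp Require Import perm.

Set Implicit Arguments.
Unset Strict Implicit.
Unset Printing Implicit Defensive.
Import Order.TTheory GRing.Theory Num.Theory.
Local Open Scope ring_scope.

(* Fix an agent i' != i, an MMS partition A of i' and a bundle A_j that B
   dominates through f.  Swapping an item g of A_j \ B with f g, which is no
   better for i' because the instance is ordered, never lowers the value of a
   bundle other than A_j; iterating, A_j ends up inside B.  The remaining
   n - 1 bundles, with the chores of B removed, then partition M \ B and are
   each worth at least mu_i'. *)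

Section Exchange.

Variables (R : numDomainType) (T I : finType) (u : T -> R).
Variables (B : {set T}) (j : I).

(* Bundles are encoded by a labelling [a : T -> I] of the items. *)
Definition exchange_map (a : T -> I) (f : T -> T) : Prop :=
  {in [pred x | a x == j] &, injective f} /\
  forall x, a x == j -> f x \in B /\ u (f x) <= u x.

Definition moved (a : T -> I) (f : T -> T) : {set T} :=
  [set x | (a x == j) && (f x != x)].

(* Relabelling by [a \o t] swaps g and f g between their bundles (a no-op when
   both lie in bundle j); afterwards f g is a fixed point of [f \o t]. *)
Lemma exchange_step a f g :
  exchange_map a f -> a g == j -> g \notin B ->
  let t := tperm g (f g) in
  [/\ exchange_map (a \o t) (f \o t),
      (#|moved (a \o t) (f \o t)| < #|moved a f|)%N &
      forall l, l != j -> \sum_(x | a x == l) u x <= \sum_(x | a (t x) == l) u x].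
Proof.
move=> [f_inj f_dom] ag gB t.
have [_ le_fg_g] := f_dom g ag.
have fg_neq_g : f g != g by apply: contraNneq gB => <-; have [] := f_dom g ag.
split.
- split=> [x y atx aty /= /(f_inj _ _ atx aty)/perm_inj // | x /= atx].
  have [fB _] := f_dom _ atx; split=> //.
  rewrite /t; case: tpermP atx fB => [-> afg _ | -> _ _ | _ _ ax _].
  + by have [_ le] := f_dom _ afg; apply: le_trans le le_fg_g.
  + exact: lexx.
  + by have [] := f_dom x ax.
- have moved_sub : moved (a \o t) (f \o t) \subset t @^-1: (moved a f :\ g).
    apply/subsetP => x; rewrite !inE /= => /andP[atx ftx]; rewrite atx /=.
    rewrite /t; case: tpermP ftx atx => [-> ffg afg | -> | xg _ ftx _].
    + rewrite fg_neq_g /=.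
      by apply: contra fg_neq_g => /eqP/f_inj-/(_ afg ag) ->.
    + by rewrite eqxx.
    + by rewrite ftx andbT; apply/eqP.
  apply: leq_ltn_trans (subset_leq_card moved_sub) _.
  rewrite card_preimset; last exact: perm_inj.
  by apply/proper_card/properD1; rewrite inE ag fg_neq_g.
- move=> l lj; rewrite (reindex_inj (@perm_inj _ t)) /=.
  apply: ler_sum => x; rewrite /t; case: tpermP => [-> | -> | //] // /eqP agl.
  by rewrite -agl ag in lj.
Qed.

Lemma exchange a f : exchange_map a f ->
  exists2 a' : T -> I, (forall x, a' x == j -> x \in B) &
    forall l, l != j -> \sum_(x | a x == l) u x <= \sum_(x | a' x == l) u x.
Proof.
have [k] := ubnP #|moved a f|; elim: k a f => [//|k IH] a f lt_moved f_map.
case: (pickP [pred g | (a g == j) && (g \notin B)]) => [g /andP[ag gB] | inB].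
  have [f_map' lt' le'] := exchange_step f_map ag gB.
  have [a' a'B le_a'] := IH _ _ (leq_trans lt' lt_moved) f_map'.
  by exists a' => // l lj; apply: le_trans (le' l lj) (le_a' l lj).
exists a => [x ax | l _]; last exact: lexx.
by apply: contraFT (inB x) => xB; rewrite /= ax.
Qed.

End Exchange.

Lemma ordered_homo (R : realDomainType) n m (v : 'I_n -> 'I_m -> R) i :
  ordered v -> {homo v i : x y / (x <= y)%N >-> x <= y}.
Proof.
move=> v_ord x y le_xy.
suff : forall d (y : 'I_m), y = (x + d)%N :> nat -> v i x <= v i y.
  by move/(_ (y - x)%N y); apply; rewrite subnKC.
elim=> [|d IH] z; first by rewrite addn0 => /val_inj ->.
move=> def_z; have lt_xd : (x + d < m)%N by rewrite -addnS -def_z ltnW.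
apply: le_trans (IH (Ordinal lt_xd) erefl) _.
by apply: v_ord; rewrite def_z addnS.
Qed.

Lemma partition_labelling m k (A : {ffun 'I_k -> {set 'I_m}}) (l0 : 'I_k) :
  is_partition setT A ->
  exists a : 'I_m -> 'I_k, forall x l, (a x == l) = (x \in A l).
Proof.
move=> /andP[/forallP A_disj /eqP A_cover].
exists (fun x => odflt l0 [pick l | x \in A l]) => x l.
case: pickP => [l' xl' | notin] /=; last first.
  have /bigcupP[l'' _ xl''] : x \in \bigcup_(l < k) A l by rewrite A_cover inE.
  by have := notin l''; rewrite /= xl''.
case: (eqVneq l' l) => [<- // | ne]; apply/esym/negbTE.
by have /forallP/(_ l) := A_disj l'; rewrite ne /= => /disjointFr/(_ xl') ->.
Qed.

Section MaximinShare.

Variables (R : realDomainType) (m : nat) (u : 'I_m -> R).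

Lemma pmin_le_mms (S : {set 'I_m}) k (A : {ffun 'I_k -> {set 'I_m}}) :
  is_partition S A -> pmin u A <= mms u S k.
Proof. by move=> A_part; rewrite /mms (bigD1 A) //= le_max lexx. Qed.

Hypothesis u_le0 : forall x, u x <= 0.

Lemma bval_le_setD (S C : {set 'I_m}) : bval u S <= bval u (S :\: C).
Proof. by rewrite /bval (big_setID C) gerDr sumr_le0. Qed.

Lemma le_mms_setC (C : {set 'I_m}) n k (a : 'I_m -> 'I_n) (j : 'I_n) (c : R) :
  k = n.-1 -> c <= 0 -> (forall x, a x == j -> x \in C) ->
  (forall l, l != j -> c <= \sum_(x | a x == l) u x) -> c <= mms u (~: C) k.
Proof.
move=> def_k c_le0 aC c_le.
pose A := [ffun l : 'I_k => [set x | a x == lift j (cast_ord def_k l)] :\: C].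
have A_part : is_partition (~: C) A.
  apply/andP; split.
    apply/forallP => l1; apply/forallP => l2; apply/implyP => l12.
    apply/pred0P => x /=; rewrite !ffunE !inE.
    apply: contra_neqF l12 => /andP[/andP[_ /eqP ->] /andP[_ /eqP]].
    by move/lift_inj/cast_ord_inj.
  apply/eqP/setP => x; rewrite inE; apply/bigcupP/idP => [[l _] | xC].
    by rewrite ffunE !inE => /andP[].
  case: (unliftP j (a x)) => [l def_l | ajx]; last by rewrite aC ?ajx in xC.
  exists (cast_ord (esym def_k) l) => //.
  by rewrite ffunE !inE cast_ordKV -def_l eqxx xC.
apply: le_trans (pmin_le_mms A_part); apply: le_bigmin => // l _.
rewrite ffunE; apply: le_trans (bval_le_setD _ _).
have := c_le (lift j (cast_ord def_k l)); rewrite eq_sym neq_lift => /(_ isT).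
by rewrite /bval big_set.
Qed.

End MaximinShare.

Theorem lemma16 (R : realDomainType) (n m : nat) (v : 'I_n -> 'I_m -> R)
  (B : {set 'I_m}) (i : 'I_n) :
  chores v -> ordered v ->
  mms (v i) setT n <= bval (v i) B ->
  (forall i' : 'I_n, i' != i ->
     exists A : {ffun 'I_n -> {set 'I_m}},
       is_mms_partition (v i') setT n A /\ exists j, succeq B (A j)) ->
  valid_reduction v [set i] B.
Proof.
move=> v_le0 v_ord Bi dom; split.
  exists (fun _ => B); split; [|split].
  - by move=> i1 i2; rewrite !inE => /eqP-> /eqP->; rewrite eqxx.
  - by rewrite big_set1.
  - by move=> i'; rewrite inE => /eqP->.
move=> i'; rewrite !inE => i'i.
have [A [[A_part A_mms] [j [f [f_inj f_dom]]]]] := dom i' i'i.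
have [a aA] := partition_labelling j A_part.
have f_map : exchange_map (v i') B j a f.
  split=> [x y | x]; rewrite ?inE !aA; first exact: f_inj.
  by move=> /f_dom[fB le_fx]; split; last exact: ordered_homo.
have [a' a'B le_a'] := exchange f_map.
apply: (le_mms_setC (v_le0 i') (a := a') (j := j)) => //.
- by rewrite cardsC1 card_ord.
- by apply: le_trans (A_mms j) _; apply: sumr_le0.
- move=> l lj; apply: le_trans (le_a' l lj).
  by apply: le_trans (A_mms l) _; rewrite /bval (eq_bigl _ _ (aA ^~ l)).
Qed.
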